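(* Let $S\subseteq[2n]$ with $1\le|S|\le 2n-1$. Let $\mathcal P_S=\{B_{i,j}:i\ne j,\ \{i,j\}\subseteq S\text{ or }\{i,j\}\subseteq[2n]\setminus S\}$ and let $\mathcal O_S=\{\gamma_j:j\in[2n]\setminus S\}$ if $|S|$ is even and $\mathcal O_S=\{\gamma_j:j\in S\}$ if $|S|$ is odd. Then every element of $\mathcal P_S\cup\mathcal O_S$ commutes with $\gamma_S$, and the commutant of $\mathcal P_S\cup\mathcal O_S$ (hence also the commutant of the group of all unitaries generated by braid operators $B_{i,j}$ and single Majoranas $\gamma_j$ that fix $\gamma_S$ under conjugation) equals $\operatorname{Span}(I,\gamma_S)$. Thus the assemblage of degree-$|S|$ Majorana observables is rigidly symmetric under braid and single-Majorana transformations.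
   Context: Let $\gamma_1,\dots,\gamma_{2n}$ be Majorana operators on $(\mathbb C^2)^{\otimes n}$ (Hermitian, $\gamma_j\gamma_{j'}+\gamma_{j'}\gamma_j=2\delta_{jj'}I$); $\gamma_S=i^{\binom m2}\gamma_{j_1}\cdots\gamma_{j_m}$ for $S=\{j_1<\dots<j_m\}$. For $i\ne j$, $B_{i,j}=\frac1{\sqrt2}(I-\gamma_i\gamma_j)$. The commutant of a set of operators is the set of all operators on $(\mathbb C^2)^{\otimes n}$ commuting with each of them. *)

(* Matrices over an arbitrary numeric algebraically closed
   field C (e.g. complex numbers), acting on (C^2)^{\otimes n} = C^(2^n). *)
From HB Require Import structures.
From mathcomp Require Import all_boot all_order all_algebra.
Set Implicit Arguments. Unset Strict Implicit. Unset Printing Implicit Defensive.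
Import Order.TTheory GRing.Theory Num.Theory.
Local Open Scope ring_scope.

Section Majorana.
Variables (C : numClosedFieldType) (n : nat).
Notation Mat := 'M[C]_(2 ^ n).

Definition adj (A : Mat) : Mat := (map_mx Num.conj A)^T.

Definition is_majorana (gamma : 'I_(2 * n) -> Mat) : Prop :=
  (forall j, adj (gamma j) = gamma j) /\
  (forall j j', gamma j *m gamma j' + gamma j' *m gamma j
                = (if j == j' then 2 else 0)%:M).

Definition gprod (gamma : 'I_(2 * n) -> Mat) (s : seq 'I_(2 * n)) : Mat :=
  foldr (fun j acc => gamma j *m acc) 1%:M s.

(* gamma_S = i^{binom m 2} gamma_{j_1} ... gamma_{j_m}, j_1 < ... < j_m;
   enum S lists the elements of S in increasing order. *)
Definition gammaS (gamma : 'I_(2 * n) -> Mat) (S : {set 'I_(2 * n)}) : Mat :=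
  ('i ^+ 'C(#|S|, 2)) *: gprod gamma (enum S).

Definition braid (gamma : 'I_(2 * n) -> Mat) (i j : 'I_(2 * n)) : Mat :=
  (sqrtC (2 : C))^-1 *: (1%:M - gamma i *m gamma j).

Definition commutes (A B : Mat) : Prop := A *m B = B *m A.

Definition PS (gamma : 'I_(2 * n) -> Mat) (S : {set 'I_(2 * n)}) (M : Mat) : Prop :=
  exists i j, i != j /\
    ((i \in S /\ j \in S) \/ (i \notin S /\ j \notin S)) /\ M = braid gamma i j.

Definition OS (gamma : 'I_(2 * n) -> Mat) (S : {set 'I_(2 * n)}) (M : Mat) : Prop :=
  exists j, (if odd #|S| then j \in S else j \notin S) /\ M = gamma j.

Definition commutant (X : Mat -> Prop) (A : Mat) : Prop :=
  forall M, X M -> commutes A M.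

Definition span_I_gS (gamma : 'I_(2 * n) -> Mat) (S : {set 'I_(2 * n)}) (A : Mat) : Prop :=
  exists a b : C, A = a%:M + b *: gammaS gamma S.

Definition braid_majorana_gen (gamma : 'I_(2 * n) -> Mat) (M : Mat) : Prop :=
  (exists i j, i != j /\ M = braid gamma i j) \/ (exists j, M = gamma j).

Inductive gen_group (G : Mat -> Prop) : Mat -> Prop :=
| gg_gen M : G M -> gen_group G M
| gg_one : gen_group G 1%:M
| gg_mul M N : gen_group G M -> gen_group G N -> gen_group G (M *m N)
| gg_inv M : gen_group G M -> gen_group G (invmx M).

Definition stab_gS (gamma : 'I_(2 * n) -> Mat) (S : {set 'I_(2 * n)}) (U : Mat) : Prop :=
  gen_group (braid_majorana_gen gamma) U /\ U *m gammaS gamma S *m invmx U = gammaS gamma S.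

End Majorana.

(* The 4^n Majorana monomials gamma_T, T a subset of [2n], form a basis of the
   matrix algebra, orthogonal for the pairing tr (gamma_U^-1 gamma_T) =
   2^n [U = T]; hence A = sum_T 2^-n tr (gamma_T^-1 A) gamma_T.  If A commutes
   with an invertible P that conjugates gamma_T^-1 to its negative, then
   tr (gamma_T^-1 A) = - tr (gamma_T^-1 A) = 0.  Conjugation by gamma_i gamma_j
   flips the sign of gamma_T exactly when T separates i and j, and conjugation
   by gamma_k exactly when |T| + [k in T] is odd.  For T other than the empty
   set and S, either T separates two indices on the same side of S (use a braid
   of P_S), or T is the complement of S or all of [2n] (use a single Majorana of
   O_S).  So only the coefficients of I and gamma_S survive.  The generated
   group consists of invertible matrices, so the stabiliser of gamma_S contains
   P_S and O_S, which squeezes its commutant between Span(I, gamma_S) and the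
   commutant of P_S and O_S. *)

From mathcomp Require Import all_boot all_order all_algebra.
Import GRing.Theory Num.Theory.
Local Open Scope ring_scope.
Set Implicit Arguments. Unset Strict Implicit.

Lemma mxtrace_anticonj (R : numDomainType) m (A H P Q : 'M[R]_m) :
  P *m Q = 1%:M -> A *m P = P *m A -> Q *m H *m P = - H -> \tr (H *m A) = 0.
Proof.
move=> PQ AP QHP; apply/eqP; rewrite -eqNr -raddfN -mulNmx -QHP.
by rewrite -!mulmxA -AP [X in X == _]mxtrace_mulC -!mulmxA PQ mulmx1.
Qed.

Lemma set_constant_on_sides (I : finType) (S T : {set I}) :
  (forall i j, (i \in S) = (j \in S) -> (i \in T) = (j \in T)) ->
  [\/ T = set0, T = S, T = ~: S | T = setT].
Proof.
move=> constT.
have sides (A : {set I}) :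
    {in A &, forall i j, (i \in S) = (j \in S)} -> T :&: A = set0 \/ T :&: A = A.
  move=> sideA; case: (set_0Vmem (T :&: A)) => [->|[x]]; first by left.
  rewrite inE => /andP [xT xA]; right; apply/setP => y; rewrite inE.
  case yA: (y \in A); rewrite ?andbF // andbT (constT y x) //.
  exact: sideA.
have sidesS : T :&: S = set0 \/ T :&: S = S by apply: sides => i j -> ->.
have sidesC : T :&: ~: S = set0 \/ T :&: ~: S = ~: S.
  by apply: sides => i j; rewrite !inE => /negbTE -> /negbTE ->.
case: sidesS => TS; case: sidesC => TC; rewrite -(setID T S) setDE TS TC.
- by constructor 1; rewrite setU0.
- by constructor 3; rewrite set0U.
- by constructor 2; rewrite setU0.
- by constructor 4; rewrite setUCr.
Qed.

Section Majorana.

Variables (C : numClosedFieldType) (n : nat) (gamma : 'I_(2 * n) -> 'M[C]_(2 ^ n)).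
Hypothesis gamma_majorana : is_majorana gamma.

Local Notation mono T := (gprod gamma (enum T)).
Local Notation mono_rev T := (gprod gamma (rev (enum T))).

Lemma majorana_sq j : gamma j *m gamma j = 1%:M.
Proof.
have := gamma_majorana.2 j j; rewrite eqxx -mulr2n -scaler_nat -scalemx1.
by move/(scalerI (lt0r_neq0 (ltr0n C 2))).
Qed.

Lemma majorana_anticomm j j' : j != j' -> gamma j *m gamma j' = - (gamma j' *m gamma j).
Proof.
move=> /negbTE neq_jj'; have := gamma_majorana.2 j j'; rewrite neq_jj' raddf0.
by move/eqP; rewrite addr_eq0 => /eqP.
Qed.

Lemma gprod_cat s t : gprod gamma (s ++ t) = gprod gamma s *m gprod gamma t.
Proof. by elim: s => [|j s IHs] /=; rewrite ?mul1mx // IHs mulmxA. Qed.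

Lemma mul_gprod_rev s : gprod gamma (rev s) *m gprod gamma s = 1%:M.
Proof.
elim: s => [|j s IHs] /=; first by rewrite mulmx1.
rewrite rev_cons -cats1 gprod_cat /= mulmx1 mulmxA -[_ *m gamma j *m gamma j]mulmxA.
by rewrite majorana_sq mulmx1.
Qed.

Lemma gamma_gprodC k s : gamma k *m gprod gamma s =
  (-1) ^+ count (predC1 k) s *: (gprod gamma s *m gamma k).
Proof.
elim: s => [|j s IHs] /=; first by rewrite scale1r mulmx1 mul1mx.
rewrite mulmxA; have [->|neq_jk] := eqVneq j k.
  by rewrite /= add0n -[LHS]mulmxA [in LHS]IHs -scalemxAr mulmxA.
rewrite (@majorana_anticomm k j) 1?eq_sym // mulNmx -(mulmxA _ (gamma k)) IHs.
by rewrite -scalemxAr mulmxA /= add1n exprS mulN1r scaleNr.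
Qed.

Lemma gprod_conj k s :
  gamma k *m gprod gamma s *m gamma k = (-1) ^+ count (predC1 k) s *: gprod gamma s.
Proof. by rewrite gamma_gprodC -scalemxAl -mulmxA majorana_sq mulmx1. Qed.

Lemma gamma_pair_gprodC i j s : gamma i *m gamma j *m gprod gamma s =
  (-1) ^+ (count (predC1 i) s + count (predC1 j) s) *:
    (gprod gamma s *m (gamma i *m gamma j)).
Proof.
rewrite -mulmxA (gamma_gprodC j s) -scalemxAr [in LHS]mulmxA (gamma_gprodC i s).
by rewrite -scalemxAl scalerA -exprD addnC mulmxA.
Qed.

Lemma gprod_conj_pair i j s :
  gamma j *m gamma i *m gprod gamma s *m (gamma i *m gamma j) =
  (-1) ^+ (count (predC1 i) s + count (predC1 j) s) *: gprod gamma s.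
Proof.
have -> : gamma j *m gamma i *m gprod gamma s *m (gamma i *m gamma j) =
    gamma j *m (gamma i *m gprod gamma s *m gamma i) *m gamma j by rewrite !mulmxA.
by rewrite gprod_conj -scalemxAr -scalemxAl gprod_conj scalerA -exprD addnC.
Qed.

Lemma odd_count_enum k (T : {set 'I_(2 * n)}) :
  odd (count (predC1 k) (enum T)) = odd #|T| (+) (k \in T).
Proof.
rewrite cardE -(count_predC (pred1 k)) (count_uniq_mem _ (enum_uniq _)) mem_enum.
by rewrite addnC oddD oddb addbK.
Qed.

Lemma odd_count_pair_enum i j (T : {set 'I_(2 * n)}) :
  odd (count (predC1 i) (enum T) + count (predC1 j) (enum T)) = (i \in T) (+) (j \in T).
Proof. by rewrite oddD !odd_count_enum addbACA addbb. Qed.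

Lemma mxtrace_gprod_odd k s : odd (count (predC1 k) s) -> \tr (gprod gamma s) = 0.
Proof.
move=> odd_s; rewrite -[gprod gamma s]mulmx1.
apply: (mxtrace_anticonj (P := gamma k) (Q := gamma k)); rewrite ?majorana_sq //.
  by rewrite mulmx1 mul1mx.
by rewrite gprod_conj -signr_odd odd_s scaleN1r.
Qed.

Lemma exists_odd_count (U T : {set 'I_(2 * n)}) : U != T ->
  exists k, odd (count (predC1 k) (enum U) + count (predC1 k) (enum T)).
Proof.
move=> neq_UT.
suff [k odd_k] : exists k, odd (#|U| + #|T|) (+) (k \in U) (+) (k \in T).
  by exists k; rewrite oddD !odd_count_enum addbACA -oddD addbA.
have [oddUT|_] := boolP (odd (#|U| + #|T|)).
  have /existsP [k /eqP eq_k] : [exists k, (k \in U) == (k \in T)].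
    apply: contraLR oddUT => /existsPn neq_k.
    have -> : T = ~: U.
      by apply/setP => k; rewrite inE; move: (neq_k k); case: (k \in U); case: (k \in T).
    by rewrite cardsC card_ord oddM.
  by exists k; rewrite eq_k addbK.
have /existsP [k neq_k] : [exists k, (k \in U) != (k \in T)].
  rewrite -negb_forall; apply: contra neq_UT => /forallP eq_k.
  by apply/eqP/setP => k; apply/eqP.
by exists k; rewrite -addbA addFb -negb_eqb.
Qed.

Lemma mxtrace_mono_rev (U T : {set 'I_(2 * n)}) :
  \tr (mono_rev U *m mono T) = if U == T then (2 ^ n)%:R else 0.
Proof.
have [->|/exists_odd_count [k odd_k]] := eqVneq U T.
  by rewrite mul_gprod_rev mxtrace1.
by rewrite -gprod_cat (mxtrace_gprod_odd (k := k)) // count_cat count_rev.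
Qed.

Lemma mxtrace_mono_rev_sum (c : {set 'I_(2 * n)} -> C) (U : {set 'I_(2 * n)}) :
  \tr (mono_rev U *m \sum_T c T *: mono T) = c U * (2 ^ n)%:R.
Proof.
rewrite mulmx_sumr raddf_sum (bigD1 U) //= big1 => [|T /negbTE neq_TU].
  by rewrite -scalemxAr mxtraceZ mxtrace_mono_rev eqxx addr0.
by rewrite -scalemxAr mxtraceZ mxtrace_mono_rev eq_sym neq_TU mulr0.
Qed.

Lemma dim_neq0 : ((2 ^ n)%:R : C) != 0.
Proof. by rewrite pnatr_eq0 expn_eq0. Qed.

Lemma mono_expansion (A : 'M[C]_(2 ^ n)) :
  A = \sum_(T : {set 'I_(2 * n)}) ((2 ^ n)%:R^-1 * \tr (mono_rev T *m A)) *: mono T.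
Proof.
pose X := [tuple mono (enum_val i) | i < #|{set 'I_(2 * n)}|].
have sumX (c : 'I_#|{set 'I_(2 * n)}| -> C) :
    \sum_i c i *: X`_i = \sum_(T : {set 'I_(2 * n)}) c (enum_rank T) *: mono T.
  rewrite (big_enum_val (fun T => c (enum_rank T) *: mono T)).
  by apply: eq_bigr => i _; rewrite enum_valK nth_mktuple.
have freeX : free X.
  apply/freeP => c sum0 i.
  move: sum0 => /(congr1 (fun B => \tr (mono_rev (enum_val i) *m B))) /=.
  rewrite sumX mxtrace_mono_rev_sum enum_valK mulmx0 mxtrace0 => /eqP.
  by rewrite mulf_eq0 (negbTE dim_neq0) orbF => /eqP.
have spanX : (<<X>> = fullv)%VS.
  apply/eqP; rewrite eqEdim subvf dimvf dim_matrix (eqP freeX) size_tuple.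
  rewrite -cardsT -powersetT card_powerset cardsT card_ord mul2n -addnn expnD.
  exact: leqnn.
have [d ->] : exists d, A = \sum_(T : {set 'I_(2 * n)}) d T *: mono T.
  exists (fun T => coord X (enum_rank T) A); rewrite -(sumX (coord X ^~ A)).
  by apply: coord_span; rewrite spanX memvf.
by apply: eq_bigr => T _; rewrite mxtrace_mono_rev_sum mulrC mulfK ?dim_neq0.
Qed.

Lemma commutes_braid i j A :
  commutes A (braid gamma i j) -> commutes A (gamma i *m gamma j).
Proof.
rewrite /commutes /braid -scalemxAr -scalemxAl.
have sqrt2_neq0 : (sqrtC 2 : C)^-1 != 0 by rewrite invr_eq0 sqrtC_eq0 pnatr_eq0.
move=> /(scalerI sqrt2_neq0); rewrite mulmxBr mulmxBl mulmx1 mul1mx.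
by move=> /addrI /oppr_inj; rewrite mulmxA.
Qed.

Lemma braid_unitmx i j : i != j -> braid gamma i j \in unitmx.
Proof.
move=> neq_ij; suff /mulmx1_unit [] :
  braid gamma i j *m ((sqrtC 2)^-1 *: (1%:M + gamma i *m gamma j)) = 1%:M by [].
have sq_ij : gamma i *m gamma j *m (gamma i *m gamma j) = - 1%:M.
  rewrite -mulmxA (mulmxA (gamma j)) (@majorana_anticomm j i) 1?eq_sym //.
  by rewrite mulNmx mulmxN -mulmxA !majorana_sq mulmx1 majorana_sq.
rewrite /braid -scalemxAr -scalemxAl scalerA mulmxBl mul1mx mulmxDr mulmx1 sq_ij.
rewrite opprB addrA [1%:M + _ + 1%:M]addrAC addrK -mulr2n -scaler_nat scalerA.
by rewrite -invfM -expr2 sqrtCK mulVf ?pnatr_eq0 // scale1r.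
Qed.

Lemma same_sideE (S : {set 'I_(2 * n)}) i j :
  (i \in S /\ j \in S) \/ (i \notin S /\ j \notin S) <-> (i \in S) = (j \in S).
Proof.
split=> [[[-> ->] | [/negbTE -> /negbTE ->]] // | eq_ij].
by case iS: (i \in S); [left | right]; rewrite -eq_ij iS.
Qed.

Lemma OS_indexE (S : {set 'I_(2 * n)}) k :
  (if odd #|S| then k \in S else k \notin S) <-> (k \in S) = odd #|S|.
Proof. by case: (odd _); case: (k \in S). Qed.

Lemma PS_OS_commute_gammaS (S : {set 'I_(2 * n)}) M :
  PS gamma S M \/ OS gamma S M -> commutes M (gammaS gamma S).
Proof.
rewrite /commutes /gammaS -scalemxAr -scalemxAl.
case=> [[i [j [_ [/same_sideE side_ij ->]]]] | [k [/OS_indexE kS ->]]]; congr (_ *: _).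
  rewrite /braid -scalemxAl -scalemxAr mulmxBl mulmxBr mul1mx mulmx1 gamma_pair_gprodC.
  by rewrite -signr_odd odd_count_pair_enum side_ij addbb scale1r.
by rewrite gamma_gprodC -signr_odd odd_count_enum kS addbb scale1r.
Qed.

Lemma exists_OS_index (S : {set 'I_(2 * n)}) :
  (0 < #|S| < 2 * n)%N -> exists k, (k \in S) = odd #|S|.
Proof.
case/andP=> S_gt0 S_lt; case: (odd #|S|).
  have /set0Pn [k kS] : S != set0 by rewrite -card_gt0.
  by exists k.
have /set0Pn [k kS] : ~: S != set0.
  by rewrite -card_gt0 -(ltn_add2l #|S|) addn0 cardsC card_ord.
by exists k; rewrite inE in kS; apply/negbTE.
Qed.

Lemma separating_generator (S T : {set 'I_(2 * n)}) :
  (0 < #|S| < 2 * n)%N -> T != set0 -> T != S ->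
  (exists i j, i != j /\ (i \in S) = (j \in S) /\ (i \in T) != (j \in T)) \/
  (exists k, (k \in S) = odd #|S| /\ odd (count (predC1 k) (enum T))).
Proof.
move=> S_range T_neq0 T_neqS.
have [/existsP [i /existsP [j /andP [/eqP side_ij sep_ij]]] | /existsPn nsep] :=
  boolP [exists i, exists j, ((i \in S) == (j \in S)) && ((i \in T) != (j \in T))].
  by left; exists i, j; split=> //; apply: contraNneq sep_ij => ->.
right; have [k kS] := exists_OS_index S_range.
exists k; split=> //; rewrite odd_count_enum.
have oddC : odd #|~: S| = odd #|S|.
  by move: (cardsC S); rewrite card_ord => /(congr1 odd); rewrite oddD oddM /=;
    case: (odd #|S|); case: (odd #|~: S|).
have constT i j : (i \in S) = (j \in S) -> (i \in T) = (j \in T).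
  move=> side_ij; apply/eqP.
  by have /existsPn/(_ j) := nsep i; rewrite negb_and negbK side_ij eqxx.
case/set_constant_on_sides: constT => defT.
- by move: T_neq0; rewrite defT eqxx.
- by move: T_neqS; rewrite defT eqxx.
- by rewrite defT oddC inE kS; case: (odd #|S|).
- by rewrite defT cardsT card_ord oddM in_setT.
Qed.

Lemma mxtrace_commutant_PS_OS (S T : {set 'I_(2 * n)}) A :
  (0 < #|S| < 2 * n)%N -> commutant (fun M => PS gamma S M \/ OS gamma S M) A ->
  T != set0 -> T != S -> \tr (mono_rev T *m A) = 0.
Proof.
move=> S_range commA T_neq0 T_neqS.
have [[i [j [neq_ij [side_ij sep_ij]]]] | [k [kS odd_k]]] :=
  separating_generator S_range T_neq0 T_neqS.
- apply: (@mxtrace_anticonj _ _ _ _ (gamma i *m gamma j) (gamma j *m gamma i)).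
  + by rewrite -mulmxA (mulmxA (gamma j)) majorana_sq mul1mx majorana_sq.
  + apply/commutes_braid/commA; left; exists i, j.
    by split=> //; split=> //; apply/same_sideE.
  + rewrite gprod_conj_pair !count_rev -signr_odd odd_count_pair_enum.
    by rewrite -negb_eqb sep_ij scaleN1r.
- apply: (@mxtrace_anticonj _ _ _ _ (gamma k) (gamma k)).
  + exact: majorana_sq.
  + by apply/commA; right; exists k; split=> //; apply/OS_indexE.
  + by rewrite gprod_conj count_rev -signr_odd odd_k scaleN1r.
Qed.

Lemma commutant_PS_OS_span (S : {set 'I_(2 * n)}) A :
  (0 < #|S| < 2 * n)%N -> commutant (fun M => PS gamma S M \/ OS gamma S M) A ->
  span_I_gS gamma S A.
Proof.
move=> S_range commA; have S_neq0 : S != set0 by rewrite -card_gt0; case/andP: S_range.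
rewrite (mono_expansion A) (bigD1 set0) // (bigD1 S) //= big1 ?addr0; last first.
  move=> T /andP [T_neq0 T_neqS].
  by rewrite (mxtrace_commutant_PS_OS S_range) ?mulr0 ?scale0r.
rewrite enum_set0 /= scalemx1 /gammaS.
set a := _ * \tr (_ *m A); set b := _ * \tr (_ *m A).
exists a, (b / 'i ^+ 'C(#|S|, 2)); rewrite scalerA mulfVK //.
by rewrite expf_neq0 ?neq0Ci.
Qed.

Lemma commutes_span (S : {set 'I_(2 * n)}) A M :
  span_I_gS gamma S A -> commutes M (gammaS gamma S) -> commutes A M.
Proof.
move=> [a [b ->]] commM; rewrite /commutes mulmxDl mulmxDr scalar_mxC.
by rewrite -scalemxAl -scalemxAr commM.
Qed.

Lemma gen_group_unitmx U : gen_group (braid_majorana_gen gamma) U -> U \in unitmx.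
Proof.
elim=> [M [[i [j [neq_ij ->]]] | [j ->]] | | M N _ unitM _ unitN | M _ unitM].
- exact: braid_unitmx.
- by case: (mulmx1_unit (majorana_sq j)).
- exact: unitmx1.
- by rewrite unitmx_mul unitM.
- by rewrite unitmx_inv.
Qed.

Lemma PS_OS_stab (S : {set 'I_(2 * n)}) M :
  PS gamma S M \/ OS gamma S M -> stab_gS gamma S M.
Proof.
move=> PS_OS_M; have genM : gen_group (braid_majorana_gen gamma) M.
  apply: gg_gen; case: PS_OS_M => [[i [j [neq_ij [_ ->]]]] | [j [_ ->]]].
    by left; exists i, j.
  by right; exists j.
split=> //; rewrite (PS_OS_commute_gammaS PS_OS_M) -mulmxA mulmxV ?mulmx1 //.
exact: gen_group_unitmx.
Qed.

End Majorana.

Theorem mainTheorem14 (C : numClosedFieldType) (n : nat)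
    (gamma : 'I_(2 * n) -> 'M[C]_(2 ^ n)) (S : {set 'I_(2 * n)}) :
  is_majorana gamma ->
  (0 < #|S| < 2 * n)%N ->
  (forall M, PS gamma S M \/ OS gamma S M -> commutes M (gammaS gamma S)) /\
  (forall A, commutant (fun M => PS gamma S M \/ OS gamma S M) A <->
             span_I_gS gamma S A) /\
  (forall A, commutant (stab_gS gamma S) A <-> span_I_gS gamma S A).
Proof.
move=> gamma_majorana S_range.
have commute_gS := PS_OS_commute_gammaS gamma_majorana (S := S).
split=> //; split=> A; split.
- exact: commutant_PS_OS_span.
- by move=> spanA M /commute_gS; apply: commutes_span.
- move=> commA; apply: commutant_PS_OS_span => // M PS_OS_M.
  exact/commA/PS_OS_stab.
- move=> spanA U [/(gen_group_unitmx gamma_majorana) unitU fixU].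
  by apply: commutes_span spanA _; rewrite /commutes -{2}fixU -mulmxA mulVmx ?mulmx1.
Qed.
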